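(* Let $m,d,n\ge1$, $p,q,\lambda>0$, $g(\alpha)=\|\alpha/\lambda\|_p^q$, and let $X=[x_1,\dots,x_n]\in\mathbb{R}^{m\times n}$ be fixed. For $D\in\mathbb{R}^{m\times d}$ define $$L_X(D)=\inf_{\epsilon>0}\sup_{A\in\mathfrak{A}_\epsilon(X,D)}\tfrac1n\|(X-DA)A^\top\|_\star,\qquad C_X(D)=\inf_{\epsilon>0}\sup_{A\in\mathfrak{A}_\epsilon(X,D)}\tfrac{1}{2n}\sum_{i=1}^n\|\alpha_i\|_1^2 .$$ Then there exist finite constants $L_X$ and $C_X$, not depending on $D$, such that $L_X(D)\le L_X$ and $C_X(D)\le C_X$ for every $D\in\mathbb{R}^{m\times d}$.
   Context: For $x\in\mathbb{R}^m$, $f_x(D)=\inf_{\alpha\in\mathbb{R}^d}\tfrac12\|x-D\alpha\|_2^2+g(\alpha)$. For $\epsilon>0$, $\mathfrak{A}_\epsilon(X,D)$ is the set of matrices $A=[\alpha_1,\dots,\alpha_n]\in\mathbb{R}^{d\times n}$ with $\tfrac12\|x_i-D\alpha_i\|_2^2+g(\alpha_i)\le f_{x_i}(D)+\epsilon$ for all $i$. For a matrix $M$ with columns $m_i$, $\|M\|=\|M\|_{1\to2}=\max_i\|m_i\|_2$, and $\|M\|_\star=\sup_{\|U\|_{1\to2}\le1}\langle M,U\rangle_F$ is its dual norm with respect to the Frobenius inner product. For $0<p<1$, $\|\cdot\|_p$ is the $\ell_p$ quasi-norm. *)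

From HB Require Import structures.
From mathcomp Require Import all_boot all_order all_algebra.
From mathcomp Require Import all_classical all_reals all_analysis.
Set Implicit Arguments. Unset Strict Implicit. Unset Printing Implicit Defensive.
Import Order.TTheory GRing.Theory Num.Theory.
Local Open Scope classical_set_scope.
Local Open Scope ring_scope.

Section Defs.
Variable R : realType.

Definition l2norm {k : nat} (v : 'cV[R]_k) : R := Num.sqrt (\sum_i v i 0 ^+ 2).
Definition l1norm {k : nat} (v : 'cV[R]_k) : R := \sum_i `|v i 0|.
Definition lpnorm {k : nat} (p : R) (v : 'cV[R]_k) : R :=
  (\sum_i `|v i 0| `^ p) `^ p^-1.

Definition norm12 {a b : nat} (M : 'M[R]_(a, b)) : R :=
  \big[Num.max/0]_j l2norm (col j M).
Definition frob {a b : nat} (M U : 'M[R]_(a, b)) : R :=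
  \sum_i \sum_j M i j * U i j.
Definition dualnorm12 {a b : nat} (M : 'M[R]_(a, b)) : \bar R :=
  ereal_sup [set (frob M U)%:E | U in [set U : 'M[R]_(a, b) | norm12 U <= 1]].

Definition gpen (p q lam : R) {k : nat} (al : 'cV[R]_k) : R :=
  lpnorm p (lam^-1 *: al) `^ q.

Definition objective {m d : nat} (g : 'cV[R]_d -> R)
  (x : 'cV[R]_m) (D : 'M[R]_(m, d)) (al : 'cV[R]_d) : R :=
  2^-1 * l2norm (x - D *m al) ^+ 2 + g al.

Definition fx {m d : nat} (g : 'cV[R]_d -> R)
  (x : 'cV[R]_m) (D : 'M[R]_(m, d)) : \bar R :=
  ereal_inf [set (objective g x D al)%:E | al in [set: 'cV[R]_d]].

Definition Aeps {m d n : nat} (g : 'cV[R]_d -> R)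
  (X : 'M[R]_(m, n)) (D : 'M[R]_(m, d)) (eps : R) : set 'M[R]_(d, n) :=
  [set A | forall i : 'I_n,
     ((objective g (col i X) D (col i A))%:E <= fx g (col i X) D + eps%:E)%E].

Definition LXD {m d n : nat} (g : 'cV[R]_d -> R)
  (X : 'M[R]_(m, n)) (D : 'M[R]_(m, d)) : \bar R :=
  ereal_inf [set ereal_sup
     [set ((n%:R)^-1)%:E * dualnorm12 ((X - D *m A) *m A^T) | A in Aeps g X D eps]%E
   | eps in [set e : R | 0 < e]].

Definition CXD {m d n : nat} (g : 'cV[R]_d -> R)
  (X : 'M[R]_(m, n)) (D : 'M[R]_(m, d)) : \bar R :=
  ereal_inf [set ereal_sup
     [set ((2 * n%:R)^-1 * \sum_i l1norm (col i A) ^+ 2)%:E | A in Aeps g X D eps]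
   | eps in [set e : R | 0 < e]].

End Defs.

From HB Require Import structures.
From mathcomp Require Import all_boot all_order all_algebra.
From mathcomp Require Import all_classical all_reals all_analysis.
From mathcomp Require Import lra.
Import Order.TTheory GRing.Theory Num.Theory.
Local Open Scope classical_set_scope.
Local Open Scope ring_scope.

(* Both infima over [eps] are bounded by their value at [eps = 1].
   Comparing a 1-approximate minimiser with the trivial code [alpha = 0]
   bounds the objective of every column of every [A] in [Aeps g X D 1] by a
   constant depending on [X] only.  The penalty term then bounds the codes
   entrywise (every entry is dominated by the l_p quasi-norm), and the
   quadratic term bounds the residuals entrywise.  Finally, a matrix [U] with
   [norm12 U <= 1] has entries of modulus at most 1, so the dual norm is at
   most the entrywise l1 norm, which is bounded by the entry bounds. *)

Section Norms.
Context {R : realType}.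

Lemma sumr_const_ord k (c : R) : \sum_(i < k) c = c *+ k.
Proof. by rewrite sumr_const card_ord. Qed.

Lemma half_sqr_ge0 (x : R) : 0 <= 2^-1 * x ^+ 2.
Proof. by rewrite mulr_ge0 ?invr_ge0 ?sqr_ge0. Qed.

Lemma entry_le_l2norm {k} (v : 'cV[R]_k) j : `|v j 0| <= l2norm v.
Proof.
rewrite /l2norm -sqrtr_sqr ler_sqrt; last by apply: sumr_ge0 => i _; apply: sqr_ge0.
by rewrite (bigD1 j) //= lerDl; apply: sumr_ge0 => i _; apply: sqr_ge0.
Qed.

Lemma entry_le_norm12 {a b} (U : 'M[R]_(a, b)) i j : `|U i j| <= norm12 U.
Proof.
have := entry_le_l2norm (col j U) i; rewrite mxE => /le_trans; apply.
exact: (le_bigmax 0 (fun j => l2norm (col j U)) j).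
Qed.

Lemma entry_le_lpnorm {k} (p : R) (v : 'cV[R]_k) j : 0 < p -> `|v j 0| <= lpnorm p v.
Proof.
move=> p0; rewrite -[leLHS]powRr1 ?normr_ge0 // -(mulfV (lt0r_neq0 p0)) powRrM /lpnorm.
apply: ge0_ler_powR; rewrite ?nnegrE ?invr_ge0 ?powR_ge0 ?(ltW p0) //.
  by apply: sumr_ge0 => i _; apply: powR_ge0.
by rewrite (bigD1 j) //= lerDl; apply: sumr_ge0 => i _; apply: powR_ge0.
Qed.

Lemma entry_le_gpen (p q lam : R) {k} (v : 'cV[R]_k) j :
  0 < p -> 0 < q -> 0 < lam -> `|v j 0| <= lam * gpen p q lam v `^ q^-1.
Proof.
move=> p0 q0 lam0.
rewrite /gpen -powRrM mulfV ?gt_eqF // powRr1 ?powR_ge0 //.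
have := entry_le_lpnorm p (lam^-1 *: v) j p0.
by rewrite mxE normrM gtr0_norm ?invr_gt0 // ler_pdivrMl.
Qed.

Lemma gpen_ge0 (p q lam : R) {k} (v : 'cV[R]_k) : 0 <= gpen p q lam v.
Proof. exact: powR_ge0. Qed.

Lemma dualnorm12_le_sum_norm {a b} (M : 'M[R]_(a, b)) :
  (dualnorm12 M <= (\sum_i \sum_j `|M i j|)%:E)%E.
Proof.
apply: ge_ereal_sup => _ [U /= U1 <-]; rewrite lee_fin.
apply: ler_sum => i _; apply: ler_sum => j _.
apply: le_trans (ler_norm _) _; rewrite normrM ler_piMr //.
exact: le_trans (entry_le_norm12 U i j) U1.
Qed.

Lemma norm_mulmx_entry_le {a k b} (B : 'M[R]_(a, k)) (C : 'M[R]_(k, b)) cB cC i j :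
  (forall l, `|B i l| <= cB) -> (forall l, `|C l j| <= cC) ->
  `|(B *m C) i j| <= (cB * cC) *+ k.
Proof.
move=> hB hC; rewrite mxE; apply: le_trans (ler_norm_sum _ _ _) _.
rewrite -[X in _ <= X]sumr_const_ord.
apply: ler_sum => l _; rewrite normrM.
by apply: ler_pM; rewrite ?normr_ge0.
Qed.

Lemma l1norm_ge0 {k} (v : 'cV[R]_k) : 0 <= l1norm v.
Proof. by apply: sumr_ge0 => j _; exact: normr_ge0. Qed.

Lemma l1norm_le {k} (v : 'cV[R]_k) c : (forall j, `|v j 0| <= c) -> l1norm v <= c *+ k.
Proof.
by move=> hv; rewrite -sumr_const_ord; apply: ler_sum.
Qed.

End Norms.

Section Objective.
Context {R : realType} {m d : nat} {g : 'cV[R]_d -> R}.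
Implicit Types (x : 'cV[R]_m) (D : 'M[R]_(m, d)) (al : 'cV[R]_d).

Lemma penalty_le_objective x D al : g al <= objective g x D al.
Proof. by rewrite /objective lerDr half_sqr_ge0. Qed.

Lemma residual_le_objective x D al :
  0 <= g al -> 2^-1 * l2norm (x - D *m al) ^+ 2 <= objective g x D al.
Proof. by move=> g0; rewrite /objective lerDl. Qed.

Lemma objective_at0 x D : objective g x D 0 = 2^-1 * l2norm x ^+ 2 + g 0.
Proof. by rewrite /objective mulmx0 subr0. Qed.

Lemma objective_Aeps_le {n} {X : 'M[R]_(m, n)} {D eps A} i al :
  Aeps g X D eps A ->
  objective g (col i X) D (col i A) <= objective g (col i X) D al + eps.
Proof.
move=> /(_ i) hA; rewrite -lee_fin; apply: le_trans hA _; rewrite EFinD.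
by apply: leeD2r; apply: ereal_inf_lbound; exists al.
Qed.

Lemma inf_sup_Aeps_le n (X : 'M[R]_(m, n)) D (F : 'M[R]_(d, n) -> \bar R) c :
  (forall A, Aeps g X D 1 A -> (F A <= c)%E) ->
  (ereal_inf [set ereal_sup [set F A | A in Aeps g X D eps]
              | eps in [set e : R | (0 < e)%R]] <= c)%E.
Proof.
move=> hF; apply: le_trans; first by apply: ereal_inf_lbound; exists 1; first exact: ltr01.
by apply: ge_ereal_sup => _ [A hA <-]; exact: hF.
Qed.

End Objective.

Section SparseCodes.
Context {R : realType} {m d n : nat} {p q lam : R}.
Hypotheses (p0 : 0 < p) (q0 : 0 < q) (lam0 : 0 < lam).
Context {X : 'M[R]_(m, n)}.
Implicit Types (D : 'M[R]_(m, d)) (A : 'M[R]_(d, n)).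

Local Notation g := (@gpen R p q lam d).

Definition objective_bound : R :=
  \sum_i (2^-1 * l2norm (col i X) ^+ 2 + g 0) + 1.

Lemma objective_bound_ge0 : 0 <= objective_bound.
Proof.
apply: addr_ge0 => //; apply: sumr_ge0 => i _.
by apply: addr_ge0; [exact: half_sqr_ge0 | exact: gpen_ge0].
Qed.

Lemma Aeps1_objective_le {D A} i :
  Aeps g X D 1 A -> objective g (col i X) D (col i A) <= objective_bound.
Proof.
move=> hA; apply: le_trans (objective_Aeps_le i 0 hA) _.
rewrite objective_at0 lerD2r (bigD1 i) //= lerDl.
by apply: sumr_ge0 => k _; apply: addr_ge0; [exact: half_sqr_ge0 | exact: gpen_ge0].
Qed.

Definition code_bound : R := lam * objective_bound `^ q^-1.
Definition residual_bound : R := 1 + 2 * objective_bound.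

Lemma Aeps1_code_le {D A} i j : Aeps g X D 1 A -> `|A j i| <= code_bound.
Proof.
move=> hA; have := entry_le_gpen p q lam (col i A) j p0 q0 lam0.
rewrite mxE => /le_trans; apply.
rewrite ler_pM2l //; apply: ge0_ler_powR; rewrite ?nnegrE ?invr_ge0 ?powR_ge0 ?(ltW q0) //.
  exact: objective_bound_ge0.
exact: le_trans (penalty_le_objective (col i X) D (col i A)) (Aeps1_objective_le i hA).
Qed.

Lemma Aeps1_residual_le {D A} i j :
  Aeps g X D 1 A -> `|(X - D *m A) j i| <= residual_bound.
Proof.
move=> hA; have hres := le_trans
  (residual_le_objective (col i X) D (col i A) (gpen_ge0 _ _ _ _)) (Aeps1_objective_le i hA).
have -> : (X - D *m A) j i = (col i X - D *m col i A) j 0.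
  have -> : col i X - D *m col i A = col i (X - D *m A) by rewrite !colE mulmxBl mulmxA.
  by rewrite [RHS]mxE.
have := entry_le_l2norm (col i X - D *m col i A) j.
have := normr_ge0 ((col i X - D *m col i A) j 0).
rewrite /residual_bound; set a := `|_|; set l := l2norm _ in hres * => a0 al.
(* [a <= l] and [l^2/2 <= K] give [a <= (1 + l^2)/2 <= 1 + 2K] *)
by nra.
Qed.

Lemma LXD_le D :
  (LXD g X D <= (n%:R^-1 * ((residual_bound * code_bound) *+ n *+ d *+ m))%:E)%E.
Proof.
apply: inf_sup_Aeps_le => A hA; rewrite EFinM.
apply: lee_wpmul2l; first by rewrite lee_fin invr_ge0.
apply: le_trans (dualnorm12_le_sum_norm _) _; rewrite lee_fin.
rewrite -(sumr_const_ord m); apply: ler_sum => i _.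
rewrite -(sumr_const_ord d); apply: ler_sum => j _.
apply: norm_mulmx_entry_le => k; first exact: Aeps1_residual_le hA.
by rewrite mxE; exact: Aeps1_code_le hA.
Qed.

Lemma CXD_le D : (CXD g X D <= ((2 * n%:R)^-1 * ((code_bound *+ d) ^+ 2 *+ n))%:E)%E.
Proof.
apply: inf_sup_Aeps_le => A hA; rewrite lee_fin.
apply: ler_wpM2l; first by rewrite invr_ge0 mulr_ge0.
rewrite -(sumr_const_ord n); apply: ler_sum => i _.
have hl : l1norm (col i A) <= code_bound *+ d.
  by apply: l1norm_le => j; rewrite mxE; exact: Aeps1_code_le hA.
have hl0 := l1norm_ge0 (col i A).
by rewrite ler_sqr ?nnegrE // (le_trans hl0 hl).
Qed.

End SparseCodes.

Theorem proposition2 (R : realType) (m d n : nat)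
  (hm : (0 < m)%N) (hd : (0 < d)%N) (hn : (0 < n)%N)
  (p q lam : R) (hp : 0 < p) (hq : 0 < q) (hlam : 0 < lam)
  (X : 'M[R]_(m, n)) :
  exists LX CX : R, forall D : 'M[R]_(m, d),
    (LXD (gpen p q lam) X D <= LX%:E)%E /\ (CXD (gpen p q lam) X D <= CX%:E)%E.
Proof.
set cA := @code_bound R m d n p q lam X; set cR := @residual_bound R m d n p q lam X.
exists (n%:R^-1 * ((cR * cA) *+ n *+ d *+ m)), ((2 * n%:R)^-1 * ((cA *+ d) ^+ 2 *+ n)).
by move=> D; split; [exact: (LXD_le hp hq hlam) | exact: (CXD_le hp hq hlam)].
Qed.
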